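(* Let $G$ be a countable multiplicatively written Abelian group with identity $e$, let $\phi$ be a height on $G$, fix $\alpha\in G$, and let $I\subseteq(0,\infty)$ be an open interval (possibly unbounded) such that for every $t\in I$ the infimum in the definition of $\phi_t(\alpha)$ is attained. Then the following conditions are equivalent: (i) There exists a finite set $\mathcal X\subseteq\mathbb R^\infty$ such that $\phi_t(\alpha)=\min\{\|\mathbf x\|_t:\mathbf x\in\mathcal X\}$ for all $t\in I$. (ii) $I$ contains only finitely many exceptional points. (iii) There exists a finite set $R\subseteq G$ (containing $e$) that replaces $G$ uniformly on $I$. (iv) There exists a set $S\subseteq G$ (containing $e$) with $\phi(S)$ finite that replaces $G$ uniformly on $I$.
   Context: A height on an Abelian group $G$ is a map $\phi:G\to[0,\infty)$ with $\phi(e)=0$ and $\phi(\beta)=\phi(\beta^{-1})$ for all $\beta\in G$. For $S\subseteq G$ containing $e$, $S^\infty$ is the set of sequences $(\alpha_1,\alpha_2,\ldots)$ with all $\alpha_n\in S$ and $\alpha_n=e$ for all but finitely many $n$; $\tau_G(\alpha_1,\alpha_2,\ldots)=\prod_n\alpha_n$. $\mathbb R^\infty$ is the set of real sequences with finitely many nonzero entries, with $\|\mathbf x\|_t=(\sum_n|x_n|^t)^{1/t}$ for $t\in(0,\infty)$. The $t$-metric version of $\phi$ is $\phi_t(\alpha)=\inf\{\|(\phi(\alpha_1),\phi(\alpha_2),\ldots)\|_t:(\alpha_1,\alpha_2,\ldots)\in G^\infty,\ \tau_G(\alpha_1,\alpha_2,\ldots)=\alpha\}$; ''the infimum is attained''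 means some such sequence achieves it. A set $S\ni e$ replaces $G$ at $t$ if $\phi_t(\alpha)$ equals the same infimum taken only over sequences in $S^\infty$ with product $\alpha$; $S$ replaces $G$ uniformly on $I$ if it replaces $G$ at every $t\in I$. A subset $K\subseteq I$ is uniform if there exists $\mathbf x\in\mathbb R^\infty$ with $\phi_t(\alpha)=\|\mathbf x\|_t$ for all $t\in K$. A point $t\in I$ is standard if there is a uniform open interval $J\subseteq I$ containing $t$, and exceptional otherwise. *)

From Stdlib Require Import Reals List ClassicalEpsilon.
Import ListNotations.
Open Scope R_scope.

(* Real power x^t for x >= 0, t > 0, with the convention 0^t = 0
   (Stdlib's Rpower 0 t is exp(t * ln 0) = 1, which is wrong here). *)
Definition rpow (x t : R) : R :=
  if Req_EM_T x 0 then 0 else Rpower x t.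

(* A finitely supported real sequence is represented by the list of its
   first entries (all remaining entries are 0). *)
Definition tnorm (t : R) (xs : list R) : R :=
  rpow (fold_right Rplus 0 (map (fun x => rpow (Rabs x) t) xs)) (/ t).

Definition gprod {G : Type} (mul : G -> G -> G) (e : G) (l : list G) : G :=
  fold_right mul e l.

Definition tvals {G : Type} (mul : G -> G -> G) (e : G) (phi : G -> R)
  (S : G -> Prop) (t : R) (alpha : G) (v : R) : Prop :=
  exists l : list G, Forall S l /\ gprod mul e l = alpha /\
                     v = tnorm t (map phi l).

Definition is_glb (E : R -> Prop) (m : R) : Prop :=
  (forall x, E x -> m <= x) /\ (forall b, (forall x, E x -> b <= x) -> b <= m).

Definition Inf (E : R -> Prop) : R :=
  epsilon (inhabits 0) (fun m => is_glb E m).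

Definition phit {G : Type} (mul : G -> G -> G) (e : G) (phi : G -> R)
  (t : R) (alpha : G) : R :=
  Inf (tvals mul e phi (fun _ => True) t alpha).

Definition attained {G : Type} (mul : G -> G -> G) (e : G) (phi : G -> R)
  (t : R) (alpha : G) : Prop :=
  exists l : list G, gprod mul e l = alpha /\
                     tnorm t (map phi l) = phit mul e phi t alpha.

Definition replaces_at {G : Type} (mul : G -> G -> G) (e : G) (phi : G -> R)
  (alpha : G) (S : G -> Prop) (t : R) : Prop :=
  phit mul e phi t alpha = Inf (tvals mul e phi S t alpha).

(* Open intervals with possibly infinite endpoints (None = -oo / +oo). *)
Definition in_oint (lo hi : option R) (t : R) : Prop :=
  match lo with Some a => a < t | None => True end /\
  match hi with Some b => t < b | None => True end.

Definition replaces_unif {G : Type} (mul : G -> G -> G) (e : G) (phi : G -> R)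
  (alpha : G) (S : G -> Prop) (I : R -> Prop) : Prop :=
  forall t, I t -> replaces_at mul e phi alpha S t.

Definition uniform {G : Type} (mul : G -> G -> G) (e : G) (phi : G -> R)
  (alpha : G) (K : R -> Prop) : Prop :=
  exists x : list R, forall t, K t -> phit mul e phi t alpha = tnorm t x.

Definition standard {G : Type} (mul : G -> G -> G) (e : G) (phi : G -> R)
  (alpha : G) (I : R -> Prop) (t : R) : Prop :=
  exists lo hi : option R,
    in_oint lo hi t /\ (forall s, in_oint lo hi s -> I s) /\
    uniform mul e phi alpha (in_oint lo hi).

Definition exceptional {G : Type} (mul : G -> G -> G) (e : G) (phi : G -> R)
  (alpha : G) (I : R -> Prop) (t : R) : Prop :=
  I t /\ ~ standard mul e phi alpha I t.

(* For a finite list x, [tnorm t x ^ t] is a sum of exponentials in t, so two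
   such norms agree either for all t > 0 or for at most finitely many t.

   (i) -> (ii): off the finitely many crossing points of the candidates in X,
   a minimizer is strictly below every genuinely different candidate, hence
   remains the minimizer on a neighbourhood.
   (ii) -> (iii): on a uniform interval, countably many representations of
   alpha attain phi_t(alpha) at uncountably many t, so one of them does so at
   enough points to agree with the uniform vector everywhere.  By
   connectedness this single representation is optimal on the whole
   component between consecutive exceptional points; one more representation
   per exceptional point finishes the job.
   (iv) -> (i): the multiplicity vectors of the finitely many heights obey
   Dickson's lemma, so every representation termwise dominates one of
   finitely many, and these realize the minimum for every t. *)

From Stdlib Require Import Reals List Sorted Lra Lia Classical ClassicalEpsilon FunctionalExtensionality PropExtensionality Cantor.
Import ListNotations.
Open Scope R_scope.

(** * Real powers and power sums *)

Lemma rpow_0 t : rpow 0 t = 0.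
Proof. unfold rpow. destruct (Req_EM_T 0 0); [reflexivity | congruence]. Qed.

Lemma rpow_nonneg x t : 0 <= rpow x t.
Proof.
  unfold rpow. destruct (Req_EM_T x 0); [lra |]. left; apply exp_pos.
Qed.

Lemma rpow_lt x y t : 0 < t -> 0 <= x < y -> rpow x t < rpow y t.
Proof.
  intros Ht Hxy. unfold rpow.
  destruct (Req_EM_T y 0); [lra |].
  destruct (Req_EM_T x 0); [apply exp_pos |].
  apply Rlt_Rpower_l; lra.
Qed.

Lemma rpow_le_iff x y t : 0 < t -> 0 <= x -> 0 <= y ->
  (rpow x t <= rpow y t <-> x <= y).
Proof.
  intros Ht Hx Hy. split; intro H.
  - destruct (Rle_lt_dec x y) as [|Hyx]; auto.
    pose proof (rpow_lt y x t Ht (conj Hy Hyx)). lra.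
  - destruct H as [H | ->]; [left; apply rpow_lt | right]; auto.
Qed.

Lemma rpow_inj x y t : 0 < t -> 0 <= x -> 0 <= y -> rpow x t = rpow y t -> x = y.
Proof.
  intros Ht Hx Hy H.
  apply Rle_antisym; apply (rpow_le_iff _ _ t); auto; lra.
Qed.

Lemma rpow_rpow_inv x t : 0 < t -> 0 <= x -> rpow (rpow x t) (/ t) = x.
Proof.
  intros Ht Hx. destruct (Req_EM_T x 0) as [-> | Hx0]; [rewrite !rpow_0; auto |].
  assert (Hpos : 0 < rpow x t).
  { rewrite <- (rpow_0 t). apply rpow_lt; lra. }
  unfold rpow at 1. destruct (Req_EM_T (rpow x t) 0); [lra |].
  unfold rpow. destruct (Req_EM_T x 0); [lra |].
  rewrite Rpower_mult, Rinv_r, Rpower_1 by lra. reflexivity.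
Qed.

(* [tnorm t xs = psum t xs ^ (1/t)], and [psum t xs] is a sum of exponentials
   in [t]. *)
Definition psum (t : R) (xs : list R) : R :=
  fold_right Rplus 0 (map (fun x => rpow (Rabs x) t) xs).

Lemma psum_nonneg t xs : 0 <= psum t xs.
Proof.
  unfold psum; induction xs as [| x xs IH]; simpl; [lra |].
  pose proof (rpow_nonneg (Rabs x) t). lra.
Qed.

Lemma tnorm_le_iff t v w : 0 < t -> (tnorm t v <= tnorm t w <-> psum t v <= psum t w).
Proof.
  intros Ht. apply rpow_le_iff; try apply psum_nonneg. now apply Rinv_0_lt_compat.
Qed.

Lemma tnorm_eq_iff t v w : 0 < t -> (tnorm t v = tnorm t w <-> psum t v = psum t w).
Proof.
  intros Ht. split; intro H; [| unfold tnorm; fold (psum t v) (psum t w); now rewrite H].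
  apply (rpow_inj _ _ (/ t)); try apply psum_nonneg; auto. now apply Rinv_0_lt_compat.
Qed.

Lemma tnorm_singleton t c : 0 < t -> 0 <= c -> tnorm t [c] = c.
Proof.
  intros Ht Hc. unfold tnorm. simpl. rewrite Rplus_0_r, Rabs_pos_eq by auto.
  now apply rpow_rpow_inv.
Qed.

(** * Exponential sums *)

Definition expsum (l : list (R * R)) (t : R) : R :=
  fold_right (fun p acc => fst p * exp (snd p * t) + acc) 0 l.

Definition expsum_deriv (l : list (R * R)) : list (R * R) :=
  map (fun p => (fst p * snd p, snd p)) l.

Definition expsum_opp (l : list (R * R)) : list (R * R) :=
  map (fun p => (- fst p, snd p)) l.

Definition expsum_shift (a : R) (l : list (R * R)) : list (R * R) :=
  map (fun p => (fst p, snd p - a)) l.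

Lemma expsum_app l1 l2 t : expsum (l1 ++ l2) t = expsum l1 t + expsum l2 t.
Proof. induction l1 as [| p l IH]; simpl; [ring | rewrite IH; ring]. Qed.

Lemma expsum_oppE l t : expsum (expsum_opp l) t = - expsum l t.
Proof. induction l as [| p l IH]; simpl; [ring | rewrite IH; ring]. Qed.

Lemma expsum_shiftE a l t : expsum (expsum_shift a l) t = exp (- a * t) * expsum l t.
Proof.
  induction l as [| [c b] l IH]; simpl; [ring |].
  rewrite IH, Rmult_plus_distr_l.
  replace ((b - a) * t) with (- a * t + b * t) by ring. rewrite exp_plus. ring.
Qed.

Lemma expsum_derivable l t : derivable_pt_lim (expsum l) t (expsum (expsum_deriv l) t).
Proof.
  induction l as [| [c a] l IH]; simpl.
  - apply derivable_pt_lim_const.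
  - apply (derivable_pt_lim_plus (fun t => c * exp (a * t)) (expsum l)); auto.
    replace (c * a * exp (a * t)) with (c * (exp (a * t) * a)) by ring.
    apply (derivable_pt_lim_scal (fun t => exp (a * t)) c).
    apply (derivable_pt_lim_comp (fun t => a * t) exp); [| apply derivable_pt_lim_exp].
    pose proof (derivable_pt_lim_scal id a t 1 (derivable_pt_lim_id t)) as H.
    now rewrite Rmult_1_r in H.
Qed.

Lemma expsum_continuous l t : continuity_pt (expsum l) t.
Proof.
  apply derivable_continuous_pt. exists (expsum (expsum_deriv l) t).
  apply expsum_derivable.
Qed.

Lemma rolle_zeros (f f' : R -> R) (Hf : forall x, derivable_pt_lim f x (f' x)) :
  forall zs z0, Sorted Rlt (z0 :: zs) -> (forall z, In z (z0 :: zs) -> f z = 0) ->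
  exists ws, Sorted Rlt ws /\ length ws = length zs /\ Forall (Rlt z0) ws /\
             (forall w, In w ws -> f' w = 0).
Proof.
  induction zs as [| z1 zs IH]; intros z0 Hs Hz.
  - exists []. repeat split; auto. intros w [].
  - apply Sorted_inv in Hs as [Hs Hhd]. inversion Hhd as [| ? ? H01]; subst.
    destruct (IH z1 Hs (fun z h => Hz z (or_intror h))) as [ws [Hws [Hlen [Hgt Hzero]]]].
    assert (Hdiff : forall x, z0 < x < z1 -> derivable_pt f x)
      by (intros x _; exists (f' x); apply Hf).
    destruct (Rolle f z0 z1 Hdiff) as [c [Pc Hc]]; auto.
    { intros x _. apply derivable_continuous_pt. exists (f' x). apply Hf. }
    { rewrite !Hz; simpl; auto. }
    rewrite (derive_pt_eq_0 f c (f' c)) in Hc by apply Hf.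
    exists (c :: ws). split; [| split; [| split]].
    + constructor; auto. destruct ws as [| w ws]; constructor.
      inversion Hgt; lra.
    + simpl; auto.
    + constructor; [lra |]. eapply Forall_impl; [| exact Hgt]. simpl; intros; lra.
    + intros w [<- | Hw]; auto.
Qed.

(* Dividing by the first exponential and differentiating removes one term,
   and by Rolle at most one zero. *)
Lemma expsum_zeros l zs : Sorted Rlt zs -> (length l < length zs)%nat ->
  (forall z, In z zs -> expsum l z = 0) -> forall t, expsum l t = 0.
Proof.
  remember (length l) as n eqn:Hn. revert l zs Hn.
  induction n as [| n IH]; intros l zs Hn Hs Hlen Hz t.
  { destruct l; [reflexivity | discriminate]. }
  destruct l as [| [c a] l]; [discriminate |]. injection Hn as Hn.
  set (g := fun t => c + expsum (expsum_shift a l) t).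
  assert (Hg : forall t, g t = exp (- a * t) * expsum ((c, a) :: l) t).
  { intro s. unfold g. simpl. rewrite expsum_shiftE, Rmult_plus_distr_l.
    replace (exp (- a * s) * (c * exp (a * s))) with (c * (exp (- a * s) * exp (a * s))) by ring.
    rewrite <- exp_plus. replace (- a * s + a * s) with 0 by ring. rewrite exp_0. ring. }
  set (g' := expsum (expsum_deriv (expsum_shift a l))).
  assert (Hgd : forall x, derivable_pt_lim g x (g' x)).
  { intro x. unfold g, g'. rewrite <- (Rplus_0_l (expsum _ x)).
    apply (derivable_pt_lim_plus (fun _ => c) (expsum (expsum_shift a l))).
    - apply derivable_pt_lim_const.
    - apply expsum_derivable. }
  destruct zs as [| z0 zs]; [simpl in Hlen; lia |].
  destruct (rolle_zeros g g' Hgd zs z0 Hs) as [ws [Hws [Hwlen [_ Hwz]]]].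
  { intros z Hz'. rewrite Hg, Hz; auto. ring. }
  assert (Hg'0 : forall x, g' x = 0).
  { apply (IH _ ws); auto.
    - unfold expsum_deriv, expsum_shift. now rewrite !length_map.
    - simpl in Hlen. lia. }
  assert (Hgdiff : derivable g) by (intro x; exists (g' x); apply Hgd).
  assert (Hconst : constant g).
  { apply (null_derivative_1 g Hgdiff). intro x.
    rewrite (derive_pt_eq_0 g x _ (Hgdiff x) (Hgd x)). auto. }
  assert (Hgt : g t = 0) by (rewrite (Hconst t z0), Hg, Hz; [ring | left; auto]).
  rewrite Hg in Hgt. apply Rmult_integral in Hgt as [H | H]; auto.
  pose proof (exp_pos (- a * t)). lra.
Qed.

(* A zero entry gets coefficient 0, since its exponent [ln 0] is junk. *)
Definition psum_coefs (v : list R) : list (R * R) :=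
  map (fun x => (if Req_EM_T (Rabs x) 0 then 0 else 1, ln (Rabs x))) v.

Lemma psum_expsum t v : psum t v = expsum (psum_coefs v) t.
Proof.
  induction v as [| x v IH]; [reflexivity |].
  unfold psum in *; simpl. rewrite IH. f_equal.
  unfold rpow, Rpower. destruct (Req_EM_T (Rabs x) 0); [ring |].
  rewrite Rmult_comm. ring.
Qed.

Fixpoint insert_sorted (x : R) (l : list R) : list R :=
  match l with
  | [] => [x]
  | y :: l' => if Rlt_dec x y then x :: y :: l' else y :: insert_sorted x l'
  end.

Lemma insert_sorted_In x l z : In z (insert_sorted x l) <-> x = z \/ In z l.
Proof.
  induction l as [| y l IH]; simpl; [tauto |].
  destruct (Rlt_dec x y); simpl; [tauto |]. rewrite IH. tauto.
Qed.

Lemma insert_sorted_length x l : length (insert_sorted x l) = S (length l).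
Proof. induction l as [| y l IH]; simpl; auto. destruct (Rlt_dec x y); simpl; auto. Qed.

Lemma insert_sorted_sorted x l : Sorted Rlt l -> ~ In x l -> Sorted Rlt (insert_sorted x l).
Proof.
  induction l as [| y l IH]; intros Hs Hx; simpl; [repeat constructor |].
  apply Sorted_inv in Hs as [Hs Hhd].
  destruct (Rlt_dec x y) as [Hxy | Hxy].
  - repeat constructor; auto.
  - assert (Hyx : y < x) by (destruct (Rtotal_order x y) as [| []]; simpl in Hx; intuition lra).
    constructor; [apply IH; simpl in Hx; tauto |].
    destruct l as [| z l]; simpl; [constructor; auto |].
    destruct (Rlt_dec x z); constructor; auto. now inversion Hhd.
Qed.

Lemma sort_NoDup zs : NoDup zs ->
  exists ys, Sorted Rlt ys /\ length ys = length zs /\ incl ys zs.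
Proof.
  induction zs as [| z zs IH]; intros Hnd.
  - exists []. repeat split; auto. intros y [].
  - apply NoDup_cons_iff in Hnd as [Hz Hnd]. destruct (IH Hnd) as [ys [Hs [Hlen Hincl]]].
    exists (insert_sorted z ys). split; [| split].
    + apply insert_sorted_sorted; auto.
    + rewrite insert_sorted_length; simpl; auto.
    + intros y Hy. apply insert_sorted_In in Hy as [<- | Hy]; [left | right]; auto.
Qed.

Lemma psum_identity v w zs : NoDup zs -> (length v + length w < length zs)%nat ->
  (forall z, In z zs -> psum z v = psum z w) -> forall s, psum s v = psum s w.
Proof.
  intros Hnd Hlen Hz s.
  destruct (sort_NoDup zs Hnd) as [ys [Hs [Hylen Hincl]]].
  set (l := psum_coefs v ++ expsum_opp (psum_coefs w)).
  assert (Hl : forall s, expsum l s = psum s v - psum s w).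
  { intro u. unfold l. rewrite expsum_app, expsum_oppE, !psum_expsum. ring. }
  assert (H0 : expsum l s = 0).
  { apply (expsum_zeros l ys Hs).
    - unfold l, expsum_opp, psum_coefs. rewrite length_app, !length_map. lia.
    - intros z Hzy. rewrite Hl, Hz; [ring | auto]. }
  rewrite Hl in H0. lra.
Qed.

Lemma tnorm_identity v w zs : NoDup zs -> (length v + length w < length zs)%nat ->
  (forall z, In z zs -> 0 < z /\ tnorm z v = tnorm z w) ->
  forall s, 0 < s -> tnorm s v = tnorm s w.
Proof.
  intros Hnd Hlen Hz s Hs. apply tnorm_eq_iff; auto.
  apply (psum_identity v w zs Hnd Hlen). intros z Hzs.
  destruct (Hz z Hzs) as [Hpos Heq]. now apply tnorm_eq_iff.
Qed.

Lemma psum_lt_locally v w t : psum t v < psum t w ->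
  exists d, 0 < d /\ forall s, Rabs (s - t) < d -> psum s v < psum s w.
Proof.
  intros H. set (l := psum_coefs w ++ expsum_opp (psum_coefs v)).
  assert (Hl : forall s, expsum l s = psum s w - psum s v).
  { intro s. unfold l. rewrite expsum_app, expsum_oppE, !psum_expsum. ring. }
  destruct (expsum_continuous l t (psum t w - psum t v)) as [d [Hd Hclose]]; [lra |].
  exists d. split; auto. intros s Hst.
  destruct (Req_EM_T s t) as [-> | Hne]; auto.
  specialize (Hclose s (conj (conj I (not_eq_sym Hne)) Hst)). simpl in Hclose.
  unfold R_dist in Hclose. rewrite !Hl in Hclose. apply Rabs_def2 in Hclose. lra.
Qed.

(** * Finiteness and countability *)

Lemma finite_of_no_NoDup (A : Type) (P : A -> Prop) (M : nat) :
  ~ (exists zs, NoDup zs /\ length zs = M /\ Forall P zs) ->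
  exists L, forall z, P z -> In z L.
Proof.
  revert P. induction M as [| M IH]; intros P HM.
  - exfalso. apply HM. exists []. repeat constructor.
  - destruct (classic (exists z, P z)) as [[z0 Hz0] | Hempty].
    + destruct (IH (fun z => P z /\ z <> z0)) as [L HL].
      { intros [zs [Hnd [Hlen Hall]]]. apply HM. exists (z0 :: zs).
        rewrite Forall_forall in *. split; [| split].
        - constructor; auto. intro Hin. now apply (Hall z0 Hin).
        - simpl; auto.
        - intros z [<- | Hz]; auto. apply Hall; auto. }
      exists (z0 :: L). intros z Hz.
      destruct (classic (z = z0)); [left | right]; auto.
    + exists []. intros z Hz. exfalso; eauto.
Qed.

Lemma interval_NoDup (N : nat) c d : c < d ->
  exists zs, NoDup zs /\ length zs = N /\ forall z, In z zs -> c < z < d.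
Proof.
  revert c d. induction N as [| N IH]; intros c d Hcd.
  - exists []. split; [constructor | split; [reflexivity | intros z []]].
  - destruct (IH c ((c + d) / 2)) as [zs [Hnd [Hlen Hin]]]; [lra |].
    exists (d - (d - c) / 4 :: zs). split; [| split].
    + constructor; auto. intro Hz. specialize (Hin _ Hz). lra.
    + simpl; auto.
    + intros z [<- | Hz]; [lra | specialize (Hin _ Hz); lra].
Qed.

Lemma psum_agree_finite v w :
  (forall s, psum s v = psum s w) \/ exists Z, forall t, psum t v = psum t w -> In t Z.
Proof.
  destruct (classic (exists zs, NoDup zs /\ length zs = S (length v + length w) /\
      Forall (fun z => psum z v = psum z w) zs)) as [[zs [Hnd [Hlen Hzs]]] | Hfew].
  - left. apply (psum_identity v w zs Hnd); [lia |]. now apply Forall_forall.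
  - right. exact (finite_of_no_NoDup R _ _ Hfew).
Qed.

Lemma tnorm_agree_on_interval v w c d : 0 <= c < d ->
  (forall s, c < s < d -> tnorm s v = tnorm s w) -> forall s, 0 < s -> tnorm s v = tnorm s w.
Proof.
  intros Hcd H.
  destruct (interval_NoDup (S (length v + length w)) c d) as [zs [Hnd [Hlen Hzs]]]; [lra |].
  apply (tnorm_identity v w zs Hnd); [lia |].
  intros z Hz. specialize (Hzs z Hz). split; [lra | auto].
Qed.

(* Nested intervals: at step n keep a closed third of the current interval
   that avoids [u n]. *)
Definition avoid_third (u : nat -> R) (n : nat) (p : R * R) : R * R :=
  let (c, d) := p in
  if Rle_dec (u n) (c + (d - c) / 3) then (c + 2 * ((d - c) / 3), d)
  else (c, c + (d - c) / 3).

Fixpoint nested (u : nat -> R) (a b : R) (n : nat) : R * R :=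
  match n with
  | O => (a, b)
  | S m => avoid_third u m (nested u a b m)
  end.

Lemma avoid_third_spec u n p : fst p < snd p ->
  fst p <= fst (avoid_third u n p) < snd (avoid_third u n p) /\
  snd (avoid_third u n p) <= snd p /\
  (u n < fst (avoid_third u n p) \/ snd (avoid_third u n p) < u n).
Proof.
  destruct p as [c d]; simpl; intros Hcd.
  destruct (Rle_dec (u n) (c + (d - c) / 3)); simpl; lra.
Qed.

Lemma nested_step u a b n : a < b ->
  fst (nested u a b n) <= fst (nested u a b (S n)) < snd (nested u a b (S n)) /\
  snd (nested u a b (S n)) <= snd (nested u a b n) /\
  (u n < fst (nested u a b (S n)) \/ snd (nested u a b (S n)) < u n).
Proof.
  intros Hab. induction n as [| n IH]; apply avoid_third_spec; [simpl; lra | apply IH].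
Qed.

Lemma nested_le u a b n m : a < b -> fst (nested u a b n) <= snd (nested u a b m).
Proof.
  intros Hab.
  assert (Hmono : forall k j, (k <= j)%nat ->
    fst (nested u a b k) <= fst (nested u a b j) /\ snd (nested u a b j) <= snd (nested u a b k)).
  { intros k j Hkj. induction Hkj; [lra |]. pose proof (nested_step u a b m0 Hab). lra. }
  destruct (Hmono n (Nat.max n m) (Nat.le_max_l _ _)).
  destruct (Hmono m (Nat.max n m) (Nat.le_max_r _ _)).
  pose proof (nested_step u a b (Nat.max n m) Hab). lra.
Qed.

Lemma interval_not_enumerable (u : nat -> R) a b : a < b ->
  exists z, a <= z <= b /\ forall n, u n <> z.
Proof.
  intros Hab.
  destruct (completeness (fun x => exists n, x = fst (nested u a b n))) as [m [Hub Hlub]].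
  { exists b. intros x [n ->]. apply (nested_le u a b n 0 Hab). }
  { exists a, 0%nat. reflexivity. }
  assert (Hl : forall n, fst (nested u a b n) <= m) by (intro n; apply Hub; exists n; auto).
  assert (Hr : forall n, m <= snd (nested u a b n)).
  { intro n. apply Hlub. intros x [k ->]. apply nested_le; auto. }
  exists m. split; [split; [apply (Hl 0%nat) | apply (Hr 0%nat)] |].
  intros n Hn. pose proof (nested_step u a b n Hab).
  specialize (Hl (S n)); specialize (Hr (S n)). lra.
Qed.

(* Otherwise every fiber is finite, and together the fibers would enumerate
   the interval. *)
Lemma interval_large_fiber (g : R -> nat) (M : nat -> nat) a b : a < b ->
  exists n zs, NoDup zs /\ length zs = M n /\ forall z, In z zs -> a < z < b /\ g z = n.
Proof.
  intros Hab. apply NNPP. intro Hno.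
  assert (Hfin : forall n, exists L, forall z, a < z < b /\ g z = n -> In z L).
  { intro n. apply (finite_of_no_NoDup R _ (M n)). intros [zs [Hnd [Hlen Hall]]].
    apply Hno. exists n, zs. rewrite Forall_forall in Hall. auto. }
  destruct (choice _ Hfin) as [fiber Hfiber].
  set (u := fun k => let p := Cantor.of_nat k in nth (snd p) (fiber (fst p)) 0).
  destruct (interval_not_enumerable u ((2 * a + b) / 3) ((a + 2 * b) / 3)) as [z [Hzab Hnot]];
    [lra |].
  assert (Hin : In z (fiber (g z))) by (apply Hfiber; split; [lra | auto]).
  destruct (In_nth _ _ 0 Hin) as [i [_ Hi]].
  apply (Hnot (Cantor.to_nat (g z, i))). unfold u. now rewrite Cantor.cancel_of_to.
Qed.

Fixpoint decode_nat_list (len c : nat) : list nat :=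
  match len with
  | O => []
  | S len' => let p := Cantor.of_nat c in fst p :: decode_nat_list len' (snd p)
  end.

Lemma decode_nat_list_surj (s : list nat) : exists k,
  let p := Cantor.of_nat k in decode_nat_list (fst p) (snd p) = s.
Proof.
  assert (Hc : exists c, decode_nat_list (length s) c = s).
  { induction s as [| h s [c Hc]]; [exists 0%nat; reflexivity |].
    exists (Cantor.to_nat (h, c)). cbn [length decode_nat_list].
    rewrite Cantor.cancel_of_to. simpl. now rewrite Hc. }
  destruct Hc as [c Hc]. exists (Cantor.to_nat (length s, c)).
  cbv zeta. now rewrite Cantor.cancel_of_to.
Qed.

Lemma lists_enumerable (G : Type) : (exists f : nat -> G, forall x, exists n, f n = x) ->
  exists F : nat -> list G, forall l, exists k, F k = l.
Proof.
  intros [f Hf].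
  exists (fun k => let p := Cantor.of_nat k in map f (decode_nat_list (fst p) (snd p))).
  intro l. assert (Hs : exists s, map f s = l).
  { induction l as [| x l [s Hs]]; [exists []; auto |]. destruct (Hf x) as [n Hn].
    exists (n :: s). simpl. now rewrite Hn, Hs. }
  destruct Hs as [s <-]. destruct (decode_nat_list_surj s) as [k Hk].
  exists k. simpl in *. now rewrite Hk.
Qed.

(** * Finite choice and Dickson's lemma *)

Lemma merge_witnesses {A X : Type} (Good : X -> Prop) (Q : A -> list X -> Prop)
  (Q_incl : forall a Z Z', incl Z Z' -> Q a Z -> Q a Z') :
  forall l, (forall a, In a l -> exists Z, (forall z, In z Z -> Good z) /\ Q a Z) ->
  exists Z, (forall z, In z Z -> Good z) /\ forall a, In a l -> Q a Z.
Proof.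
  induction l as [| a l IH]; intros H.
  - exists []. split; [intros z [] | intros a []].
  - destruct (H a (or_introl eq_refl)) as [Z1 [G1 Q1]].
    destruct (IH (fun b h => H b (or_intror h))) as [Z2 [G2 Q2]].
    exists (Z1 ++ Z2). split.
    + intros z Hz. apply in_app_or in Hz as [Hz | Hz]; auto.
    + intros b [<- | Hb]; [apply (Q_incl a Z1) | apply (Q_incl b Z2)]; auto;
        intros z Hz; apply in_or_app; auto.
Qed.

Definition vle (a b : list nat) : Prop := Forall2 le a b.

Definition max_head (B : list (list nat)) : nat :=
  fold_right (fun b m => Nat.max (hd 0%nat b) m) 0%nat B.

Lemma max_head_ge B h r : In (h :: r) B -> (h <= max_head B)%nat.
Proof.
  induction B as [| b B IH]; intros Hin; [destruct Hin |]. simpl.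
  destruct Hin as [-> | Hin]; simpl; [lia | specialize (IH Hin); lia].
Qed.

Lemma dickson k (A : list nat -> Prop) : (forall a, A a -> length a = k) ->
  exists B, (forall b, In b B -> A b) /\ forall a, A a -> exists b, In b B /\ vle b a.
Proof.
  revert A. induction k as [| k IH]; intros A HA.
  - destruct (classic (exists a, A a)) as [[a0 Ha0] | Hempty].
    + exists [a0]. split; [intros b [<- | []]; auto |].
      intros a Ha. exists a0. split; [left; auto |].
      destruct a, a0; try discriminate (HA _ Ha); try discriminate (HA _ Ha0). constructor.
    + exists []. split; [intros b [] | intros a Ha; exfalso; eauto].
  - destruct (IH (fun r => exists h, A (h :: r))) as [BT [HBT HBTmin]].
    { intros r [h Hh]. specialize (HA _ Hh). simpl in HA. lia. }
    (* extend each minimal tail to an element of A *)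
    destruct (merge_witnesses A (fun r Z => exists h, In (h :: r) Z) ltac:(firstorder) BT)
      as [HB [HHB HHBmin]].
    { intros r Hr. destruct (HBT r Hr) as [h Hh]. exists [h :: r].
      split; [intros z [<- | []]; auto | exists h; left; auto]. }
    (* heads below [max_head HB] are handled slice by slice *)
    destruct (merge_witnesses A
        (fun c Z => forall r, A (c :: r) -> exists b, In b Z /\ vle b (c :: r))
        ltac:(firstorder) (seq 0 (max_head HB))) as [BC [HBC HBCmin]].
    { intros c _. destruct (IH (fun r => A (c :: r))) as [Bc [HBc HBcmin]].
      { intros r Hr. specialize (HA _ Hr). simpl in HA. lia. }
      exists (map (cons c) Bc). split.
      - intros z Hz. apply in_map_iff in Hz as [r [<- Hr]]. auto.
      - intros r Hr. destruct (HBcmin r Hr) as [b [Hb Hbr]].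
        exists (c :: b). split; [apply in_map | constructor]; auto. }
    exists (HB ++ BC). split.
    + intros b Hb. apply in_app_or in Hb as [Hb | Hb]; auto.
    + intros [| h r] Ha; [discriminate (HA _ Ha) |].
      destruct (HBTmin r (ex_intro _ h Ha)) as [r0 [Hr0 Hr0r]].
      destruct (HHBmin r0 Hr0) as [h0 Hh0].
      destruct (Compare_dec.le_lt_dec h0 h) as [Hle | Hlt].
      * exists (h0 :: r0). split; [apply in_or_app; auto | constructor; auto].
      * assert (Hin : In h (seq 0 (max_head HB))).
        { apply in_seq. pose proof (max_head_ge HB h0 r0 Hh0). lia. }
        destruct (HBCmin h Hin r Ha) as [b [Hb Hbr]].
        exists b. split; [apply in_or_app |]; auto.
Qed.

Definition weighted_psum (t : R) (f : R -> nat) (L : list R) : R :=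
  fold_right (fun y acc => INR (f y) * rpow (Rabs y) t + acc) 0 L.

Lemma weighted_psum_ext t f g L : (forall y, In y L -> f y = g y) ->
  weighted_psum t f L = weighted_psum t g L.
Proof.
  induction L as [| y L IH]; intros H; simpl; auto.
  rewrite (H y (or_introl eq_refl)), IH; auto. intros z Hz; apply H; right; auto.
Qed.

Lemma weighted_psum_add t f g L :
  weighted_psum t (fun y => (f y + g y)%nat) L = weighted_psum t f L + weighted_psum t g L.
Proof. induction L as [| y L IH]; simpl; [ring | rewrite IH, plus_INR; ring]. Qed.

Lemma weighted_psum_zero t L : weighted_psum t (fun _ => 0%nat) L = 0.
Proof. induction L as [| y L IH]; simpl; [ring | rewrite IH; simpl; ring]. Qed.

Lemma weighted_psum_indicator t x L : NoDup L -> In x L ->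
  weighted_psum t (fun y => if Req_EM_T x y then 1%nat else 0%nat) L = rpow (Rabs x) t.
Proof.
  induction L as [| y L IH]; intros Hnd Hin; [destruct Hin |].
  apply NoDup_cons_iff in Hnd as [Hy Hnd]. simpl.
  destruct (Req_EM_T x y) as [-> | Hne].
  - rewrite (weighted_psum_ext t _ (fun _ => 0%nat)), weighted_psum_zero.
    + simpl; ring.
    + intros z Hz. destruct (Req_EM_T y z); auto. subst; contradiction.
  - destruct Hin as [-> | Hin]; [congruence |]. rewrite IH; auto. simpl; ring.
Qed.

Lemma psum_count t v L : NoDup L -> incl v L ->
  psum t v = weighted_psum t (count_occ Req_EM_T v) L.
Proof.
  intros Hnd. induction v as [| x v IH]; intros Hv.
  - simpl. now rewrite weighted_psum_zero.
  - rewrite (weighted_psum_ext t _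
      (fun y => ((if Req_EM_T x y then 1 else 0) + count_occ Req_EM_T v y)%nat)).
    + rewrite weighted_psum_add, weighted_psum_indicator, <- IH; auto.
      * intros z Hz; apply Hv; right; auto.
      * apply Hv; left; auto.
    + intros y _. simpl. destruct (Req_EM_T x y); reflexivity.
Qed.

Lemma weighted_psum_le t f g L : vle (map f L) (map g L) ->
  weighted_psum t f L <= weighted_psum t g L.
Proof.
  induction L as [| y L IH]; intros H; simpl; [lra |].
  inversion H as [| ? ? ? ? Hy HL]; subst.
  apply Rplus_le_compat; auto.
  apply Rmult_le_compat_r; [apply rpow_nonneg | now apply le_INR].
Qed.

(** * Intervals and infima *)

Lemma list_argmin {A} (f : A -> R) (Z : list A) : Z <> [] ->
  exists x, In x Z /\ forall y, In y Z -> f x <= f y.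
Proof.
  induction Z as [| a Z IH]; intros Hne; [congruence |].
  destruct Z as [| b Z].
  - exists a. split; [left; auto | intros y [<- | []]; lra].
  - destruct IH as [x [Hx Hmin]]; [congruence |].
    destruct (Rle_dec (f a) (f x)).
    + exists a. split; [left; auto |]. intros y [<- | Hy]; [lra | specialize (Hmin y Hy); lra].
    + exists x. split; [right; auto |]. intros y [<- | Hy]; [lra | auto].
Qed.

Lemma in_oint_ball lo hi t : in_oint lo hi t ->
  exists d, 0 < d /\ forall s, Rabs (s - t) < d -> in_oint lo hi s.
Proof.
  intros [Hlo Hhi].
  set (d1 := match lo with Some a => t - a | None => 1 end).
  set (d2 := match hi with Some b => b - t | None => 1 end).
  assert (0 < d1) by (unfold d1; destruct lo; lra).
  assert (0 < d2) by (unfold d2; destruct hi; lra).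
  exists (Rmin d1 d2). split; [now apply Rmin_glb_lt |]. intros s Hs.
  pose proof (Rmin_l d1 d2); pose proof (Rmin_r d1 d2). apply Rabs_def2 in Hs.
  split; [destruct lo | destruct hi]; auto; unfold d1, d2 in *; lra.
Qed.

Lemma in_oint_convex lo hi s t u :
  in_oint lo hi s -> in_oint lo hi t -> s <= u <= t -> in_oint lo hi u.
Proof.
  intros [Hs1 Hs2] [Ht1 Ht2] Hu. split; [destruct lo | destruct hi]; auto; lra.
Qed.

Lemma common_radius {A : Type} (Q : A -> R -> Prop)
  (Q_shrink : forall a d d', 0 < d' <= d -> Q a d -> Q a d') :
  forall l, (forall a, In a l -> exists d, 0 < d /\ Q a d) ->
  exists d, 0 < d /\ forall a, In a l -> Q a d.
Proof.
  induction l as [| a l IH]; intros H.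
  - exists 1. split; [lra | intros a []].
  - destruct (H a (or_introl eq_refl)) as [d1 [Hd1 Q1]].
    destruct (IH (fun b h => H b (or_intror h))) as [d2 [Hd2 Q2]].
    pose proof (Rmin_l d1 d2); pose proof (Rmin_r d1 d2).
    assert (0 < Rmin d1 d2) by now apply Rmin_glb_lt.
    exists (Rmin d1 d2). split; auto.
    intros b [<- | Hb]; [apply (Q_shrink a d1) | apply (Q_shrink b d2)]; auto; lra.
Qed.

Definition count_below (L : list R) (t : R) : nat :=
  length (filter (fun y => if Rlt_dec y t then true else false) L).

Lemma count_below_le L t : (count_below L t <= length L)%nat.
Proof. apply filter_length_le. Qed.

Lemma count_below_mono L s t : s <= t -> (count_below L s <= count_below L t)%nat.
Proof.
  intros Hst. unfold count_below. induction L as [| y L IH]; simpl; auto.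
  destruct (Rlt_dec y s), (Rlt_dec y t); simpl; try lia. lra.
Qed.

Lemma count_below_lt L s t y : In y L -> s <= y < t -> (count_below L s < count_below L t)%nat.
Proof.
  intros Hy Hyst. induction L as [| z L IH]; [destruct Hy |].
  pose proof (count_below_mono L s t ltac:(lra)) as Hmono.
  unfold count_below in *. simpl.
  destruct Hy as [-> | Hy].
  - destruct (Rlt_dec y s); [lra |]. destruct (Rlt_dec y t); [simpl; lia | lra].
  - specialize (IH Hy). destruct (Rlt_dec z s), (Rlt_dec z t); simpl; try lia. lra.
Qed.

Lemma count_below_eq_segment L s t u : count_below L s = count_below L t ->
  ~ In s L -> ~ In t L -> Rmin s t <= u <= Rmax s t -> ~ In u L.
Proof.
  intros Hcount Hs Ht Hu HuL. unfold Rmin, Rmax in Hu.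
  destruct (Rle_dec s t).
  - destruct (Req_EM_T u t) as [-> | Hut]; [contradiction |].
    pose proof (count_below_lt L s t u HuL ltac:(lra)). lia.
  - destruct (Req_EM_T u s) as [-> | Hus]; [contradiction |].
    pose proof (count_below_lt L t s u HuL ltac:(lra)). lia.
Qed.

Lemma glb_exists (E : R -> Prop) : (exists x, E x) -> (forall x, E x -> 0 <= x) ->
  exists m, is_glb E m.
Proof.
  intros [x0 Hx0] Hlb.
  destruct (completeness (fun y => E (- y))) as [m [Hub Hlub]].
  { exists 0. intros y Hy. specialize (Hlb _ Hy). lra. }
  { exists (- x0). now rewrite Ropp_involutive. }
  exists (- m). split.
  - intros x Hx. assert (- x <= m) by (apply Hub; now rewrite Ropp_involutive). lra.
  - intros b Hb. assert (m <= - b) by (apply Hlub; intros y Hy; specialize (Hb _ Hy); lra).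
    lra.
Qed.

Lemma Inf_is_glb E : (exists x, E x) -> (forall x, E x -> 0 <= x) -> is_glb E (Inf E).
Proof. intros Hne Hlb. unfold Inf. apply epsilon_spec. now apply glb_exists. Qed.

Lemma glb_unique E m1 m2 : is_glb E m1 -> is_glb E m2 -> m1 = m2.
Proof. intros [L1 G1] [L2 G2]. apply Rle_antisym; [apply G2 | apply G1]; auto. Qed.

(** * Heights *)

Section Heights.

Variables (G : Type) (mul : G -> G -> G) (e : G) (phi : G -> R) (alpha : G).
Hypothesis mul_e : forall x, mul x e = x.

Notation phit t := (phit mul e phi t alpha).

Definition optimal (t : R) (l : list G) : Prop :=
  gprod mul e l = alpha /\ tnorm t (map phi l) = phit t.

Lemma tvals_nonneg S t v : tvals mul e phi S t alpha v -> 0 <= v.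
Proof. intros [l [_ [_ ->]]]. apply rpow_nonneg. Qed.

Lemma phit_is_glb t : is_glb (tvals mul e phi (fun _ => True) t alpha) (phit t).
Proof.
  apply Inf_is_glb; [| apply tvals_nonneg].
  exists (tnorm t [phi alpha]), [alpha]. repeat split; auto. simpl. now rewrite mul_e.
Qed.

Lemma phit_le t l : gprod mul e l = alpha -> phit t <= tnorm t (map phi l).
Proof.
  intros Hl. apply (proj1 (phit_is_glb t)). exists l.
  repeat split; auto. now apply Forall_forall.
Qed.

Lemma phit_nonneg t : 0 <= phit t.
Proof. apply (proj2 (phit_is_glb t)). apply tvals_nonneg. Qed.

Lemma replaces_at_of_optimal S t l : Forall S l -> optimal t l ->
  replaces_at mul e phi alpha S t.
Proof.
  intros HS [Hprod Hopt]. unfold replaces_at.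
  apply (glb_unique (tvals mul e phi S t alpha)).
  - split.
    + intros v [l' [_ [Hl' ->]]]. now apply phit_le.
    + intros b Hb. rewrite <- Hopt. apply Hb. now exists l.
  - apply Inf_is_glb; [| apply tvals_nonneg]. now exists (tnorm t (map phi l)), l.
Qed.

(* Dickson's lemma applied to the multiplicity vectors of the heights, which
   take finitely many values on [S]. *)
Lemma dominating_representations (S : G -> Prop) (L : list R) :
  (forall x, S x -> In (phi x) L) ->
  exists Z, (forall l, In l Z -> Forall S l /\ gprod mul e l = alpha) /\
    forall l, Forall S l -> gprod mul e l = alpha ->
      exists l', In l' Z /\ forall t, psum t (map phi l') <= psum t (map phi l).
Proof.
  intros HL. set (L' := nodup Req_EM_T L).
  set (mults := fun v : list R => map (count_occ Req_EM_T v) L').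
  set (A := fun a => exists l, Forall S l /\ gprod mul e l = alpha /\ a = mults (map phi l)).
  destruct (dickson (length L') A) as [B [HBA HBmin]].
  { intros a [l [_ [_ ->]]]. apply length_map. }
  destruct (merge_witnesses (fun l => Forall S l /\ gprod mul e l = alpha)
      (fun b Z => exists l, In l Z /\ b = mults (map phi l)) ltac:(firstorder) B)
    as [Z [HZ HZB]].
  { intros b Hb. destruct (HBA b Hb) as [l [HS [Hprod ->]]].
    exists [l]. split; [intros z [<- | []]; auto | exists l; split; [left |]; auto]. }
  assert (Hincl : forall l, Forall S l -> incl (map phi l) L').
  { intros l Hl y Hy. apply in_map_iff in Hy as [g [<- Hg]].
    rewrite Forall_forall in Hl. apply nodup_In. auto. }
  exists Z. split; auto. intros l HS Hprod.
  destruct (HBmin (mults (map phi l))) as [b [Hb Hbl]]; [exists l; auto |].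
  destruct (HZB b Hb) as [l' [Hl' ->]]. exists l'. split; auto. intro t.
  rewrite !(psum_count t _ L'); try apply NoDup_nodup; try apply Hincl; auto.
  - now apply weighted_psum_le.
  - apply (HZ l' Hl').
Qed.

Definition min_norm (X : list (list R)) (t : R) : Prop :=
  (exists x, In x X /\ phit t = tnorm t x) /\ (forall x, In x X -> phit t <= tnorm t x).

(* Without any [S]-representation, replacement forces [phit t] to be the junk
   value [Inf] of the empty set, a constant. *)
Lemma min_norm_of_no_representation (I : R -> Prop) (I_pos : forall t, I t -> 0 < t)
  (S : G -> Prop) : replaces_unif mul e phi alpha S I ->
  ~ (exists l, Forall S l /\ gprod mul e l = alpha) ->
  exists X, X <> [] /\ forall t, I t -> min_norm X t.
Proof.
  intros Hrep Hnone. set (c := Inf (fun _ : R => False)).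
  assert (Hc : forall t, I t -> phit t = c).
  { intros t Ht. rewrite (Hrep t Ht). unfold c. f_equal.
    apply functional_extensionality. intro v. apply propositional_extensionality.
    split; [intros [l [HS [Hprod _]]] | intros []]. apply Hnone; eauto. }
  exists [[c]]. split; [congruence |]. intros t Ht.
  assert (Hnn : 0 <= c) by (rewrite <- (Hc t Ht); apply phit_nonneg).
  assert (Hcc : tnorm t [c] = c) by (apply tnorm_singleton; auto).
  unfold min_norm. rewrite Hc by auto.
  split; [exists [c]; split; [left |]; auto | intros x [<- | []]; lra].
Qed.

Lemma min_norm_of_finite_heights (I : R -> Prop) (I_pos : forall t, I t -> 0 < t)
  (S : G -> Prop) (L : list R) : (forall x, S x -> In (phi x) L) ->
  replaces_unif mul e phi alpha S I ->
  exists X, X <> [] /\ forall t, I t -> min_norm X t.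
Proof.
  intros HL Hrep.
  destruct (classic (exists l, Forall S l /\ gprod mul e l = alpha))
    as [[l0 [HS0 Hprod0]] | Hnone]; [| now apply (min_norm_of_no_representation I I_pos S)].
  destruct (dominating_representations S L HL) as [Z [HZ Hdom]].
  assert (HZne : Z <> []).
  { destruct (Hdom l0 HS0 Hprod0) as [l' [Hl' _]]. intros ->. destruct Hl'. }
  exists (map (map phi) Z). split; [destruct Z; simpl; congruence |].
  intros t Ht. pose proof (I_pos t Ht) as Htpos. split.
  - destruct (list_argmin (fun l => tnorm t (map phi l)) Z HZne) as [x [Hx Hxmin]].
    exists (map phi x). split; [now apply in_map |].
    destruct (HZ x Hx) as [HSx Hprodx].
    rewrite (Hrep t Ht). apply (glb_unique (tvals mul e phi S t alpha)).
    + apply Inf_is_glb; [now exists (tnorm t (map phi x)), x | apply tvals_nonneg].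
    + split.
      * intros v [l [HS [Hprod ->]]]. destruct (Hdom l HS Hprod) as [l' [Hl' Hle]].
        apply Rle_trans with (tnorm t (map phi l')); [auto | now apply tnorm_le_iff].
      * intros b Hb. apply Hb. now exists x.
  - intros x Hx. apply in_map_iff in Hx as [l [<- Hl]]. apply phit_le, (HZ l Hl).
Qed.

Section OpenInterval.

Variables (lo hi : option R).
Hypothesis I_pos : forall t, in_oint lo hi t -> 0 < t.

Notation I := (in_oint lo hi).

Lemma standard_of_strict_min X t x : (forall s, I s -> min_norm X s) ->
  I t -> In x X -> phit t = tnorm t x ->
  (forall y, In y X -> (forall s, psum s x = psum s y) \/ psum t x <> psum t y) ->
  standard mul e phi alpha I t.
Proof.
  intros HX Ht Hx Hxt Hstrict. pose proof (I_pos t Ht) as Htpos.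
  destruct (common_radius
      (fun y d => forall s, Rabs (s - t) < d -> I s -> tnorm s x <= tnorm s y)
      ltac:(intros y d d' Hd H s Hs; apply H; lra) X) as [d [Hd Hnear]].
  { intros y Hy. destruct (Hstrict y Hy) as [Hsame | Hne].
    - exists 1. split; [lra |]. intros s _ Hs. right. apply tnorm_eq_iff; auto.
    - assert (Hle : psum t x <= psum t y).
      { apply tnorm_le_iff; auto. rewrite <- Hxt. now apply HX. }
      destruct (psum_lt_locally x y t) as [d [Hd Hlt]]; [lra |].
      exists d. split; auto. intros s Hs HIs.
      apply tnorm_le_iff; auto. left; auto. }
  destruct (in_oint_ball lo hi t Ht) as [dI [HdI HballI]].
  pose proof (Rmin_l d dI); pose proof (Rmin_r d dI).
  pose proof (Rmin_glb_lt d dI 0 Hd HdI). set (r := Rmin d dI) in *.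
  assert (Hball : forall s, in_oint (Some (t - r)) (Some (t + r)) s -> Rabs (s - t) < r)
    by (intros s [Hs1 Hs2]; simpl in *; apply Rabs_def1; lra).
  exists (Some (t - r)), (Some (t + r)). split; [split; simpl; lra | split].
  - intros s Hs. apply HballI. specialize (Hball s Hs). lra.
  - exists x. intros s Hs. specialize (Hball s Hs).
    assert (HIs : I s) by (apply HballI; lra).
    destruct (HX s HIs) as [[y [Hy Hys]] Hmin].
    apply Rle_antisym; [now apply Hmin |]. rewrite Hys. apply (Hnear y Hy s); auto. lra.
Qed.

Lemma finitely_exceptional_of_min_norm X : (forall t, I t -> min_norm X t) ->
  exists L, forall t, exceptional mul e phi alpha I t -> In t L.
Proof.
  intros HX.
  destruct (merge_witnesses (fun _ : R => True)
      (fun p Z => (forall s, psum s (fst p) = psum s (snd p)) \/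
                  (forall t, psum t (fst p) = psum t (snd p) -> In t Z))
      ltac:(intros p Z Z' Hincl [H | H]; [left | right; intros t Ht; apply Hincl]; auto)
      (list_prod X X)) as [Z [_ HZ]].
  { intros [x y] _. destruct (psum_agree_finite x y) as [Hsame | [Z HZ]].
    - exists []. split; [intros z [] | left; auto].
    - exists Z. split; [auto | right; auto]. }
  exists Z. intros t [Ht Hns]. apply NNPP. intro HtZ. apply Hns.
  destruct (HX t Ht) as [[x [Hx Hxt]] _].
  apply (standard_of_strict_min X t x); auto.
  intros y Hy. destruct (HZ (x, y)) as [Hsame | Hfin]; [now apply in_prod | left; auto |].
  right. intro Heq. apply HtZ, Hfin, Heq.
Qed.

Hypothesis G_countable : exists f : nat -> G, forall x, exists n, f n = x.
Hypothesis att : forall t, I t -> attained mul e phi t alpha.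

(* Countably many representations attain the infimum at uncountably many
   points of the uniform interval, so one of them does so at more points than
   the identity theorem allows without agreeing with x everywhere. *)
Lemma uniform_realized lo' hi' x t : (forall s, in_oint lo' hi' s -> I s) ->
  (forall s, in_oint lo' hi' s -> phit s = tnorm s x) -> in_oint lo' hi' t ->
  exists l, forall s, in_oint lo' hi' s -> optimal s l.
Proof.
  intros HJI Hx Ht.
  destruct (lists_enumerable G G_countable) as [F HF].
  destruct (in_oint_ball lo' hi' t Ht) as [d [Hd Hball]].
  assert (Hch : forall s, exists n, Rabs (s - t) < d -> optimal s (F n)).
  { intro s. destruct (classic (Rabs (s - t) < d)) as [Hs | Hs].
    - destruct (att s (HJI s (Hball s Hs))) as [l Hl]. destruct (HF l) as [n <-].
      now exists n.
    - exists 0%nat. intro; contradiction. }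
  destruct (choice _ Hch) as [g Hg].
  destruct (interval_large_fiber g (fun n => S (length x + length (F n))) (t - d) (t + d))
    as [n [zs [Hnd [Hlen Hzs]]]]; [lra |].
  assert (Hzt : forall z, In z zs -> Rabs (z - t) < d /\ g z = n)
    by (intros z Hz; destruct (Hzs z Hz) as [? ->]; split; [apply Rabs_def1; lra | auto]).
  assert (Heq : forall s, 0 < s -> tnorm s (map phi (F n)) = tnorm s x).
  { apply (tnorm_identity _ _ zs Hnd); [rewrite length_map; lia |].
    intros z Hz. destruct (Hzt z Hz) as [Hz1 Hgz].
    pose proof (Hball z Hz1) as HzJ. destruct (Hg z Hz1) as [_ Hopt]. rewrite Hgz in Hopt.
    split; [apply I_pos, HJI, HzJ | rewrite Hopt; auto]. }
  exists (F n). intros s Hs. split.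
  - destruct zs as [| z zs]; [discriminate |].
    destruct (Hzt z (or_introl eq_refl)) as [Hz Hgz].
    destruct (Hg z Hz) as [Hprod _]. now rewrite Hgz in Hprod.
  - rewrite Heq, Hx; auto.
Qed.

Lemma optimal_near_standard t : standard mul e phi alpha I t ->
  exists l d, 0 < d /\ forall s, Rabs (s - t) < d -> I s /\ optimal s l.
Proof.
  intros [lo' [hi' [Ht [HJI [x Hx]]]]].
  destruct (uniform_realized lo' hi' x t HJI Hx Ht) as [l Hl].
  destruct (in_oint_ball lo' hi' t Ht) as [d [Hd Hball]].
  exists l, d. split; auto.
Qed.

(* Near a standard point m some representation is optimal on both sides of m;
   it agrees with l on the left, hence everywhere. *)
Lemma optimal_beyond_standard m c l : I m -> standard mul e phi alpha I m -> 0 <= c < m ->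
  (forall s, c < s < m -> optimal s l) ->
  exists d, 0 < d /\ forall s, m <= s < m + d -> optimal s l.
Proof.
  intros Hm Hstd Hcm Hl.
  destruct (optimal_near_standard m Hstd) as [lm [dm [Hdm Hlm]]].
  pose proof (Rmax_l c (m - dm)); pose proof (Rmax_r c (m - dm)).
  assert (Hlt : Rmax c (m - dm) < m) by (apply Rmax_lub_lt; lra).
  assert (Hsame : forall s, 0 < s -> tnorm s (map phi l) = tnorm s (map phi lm)).
  { apply (tnorm_agree_on_interval _ _ (Rmax c (m - dm)) m); [lra |].
    intros s Hs. assert (Hsm : Rabs (s - m) < dm) by (apply Rabs_def1; lra).
    rewrite (proj2 (Hl s ltac:(lra))), (proj2 (proj2 (Hlm s Hsm))). auto. }
  exists dm. split; auto. intros s Hs.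
  assert (Hsm : Rabs (s - m) < dm) by (apply Rabs_def1; lra).
  destruct (Hlm s Hsm) as [HIs [_ Hopt]].
  split; [apply (Hl ((Rmax c (m - dm) + m) / 2)); lra |].
  rewrite Hsame; auto.
Qed.

(* Connectedness: the supremum of the points up to which l stays optimal
   cannot stop short of b. *)
Lemma optimal_propagates a b l d : a < b ->
  (forall u, a <= u <= b -> I u /\ standard mul e phi alpha I u) ->
  0 < d -> (forall s, Rabs (s - a) < d -> optimal s l) ->
  forall u, a <= u <= b -> optimal u l.
Proof.
  intros Hab Hstd Hd Hl.
  assert (Hapos : 0 < a) by (apply I_pos, (Hstd a); lra).
  set (E := fun u => a <= u <= b /\ forall v, a <= v <= u -> optimal v l).
  assert (Hstep : forall x r, a <= x < b -> 0 < r -> (forall v, a <= v < x + r -> optimal v l) ->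
      E (Rmin (x + r / 2) b) /\ x < Rmin (x + r / 2) b).
  { intros x r Hx Hr Hv. pose proof (Rmin_l (x + r / 2) b); pose proof (Rmin_r (x + r / 2) b).
    assert (x < Rmin (x + r / 2) b) by (apply Rmin_glb_lt; lra).
    split; auto. split; [lra |]. intros v Hv'. apply Hv. lra. }
  destruct (completeness E) as [m [Hub Hlub]].
  { exists b. intros u [Hu _]. lra. }
  { exists a. split; [lra |]. intros v Hv. apply Hl, Rabs_def1; lra. }
  assert (Ham : a < m).
  { destruct (Hstep a d) as [HE Hlt]; [lra | auto | |].
    - intros v Hv. apply Hl, Rabs_def1; lra.
    - specialize (Hub _ HE). lra. }
  assert (Hmb : m <= b) by (apply Hlub; intros u [Hu _]; lra).
  assert (Hbelow : forall v, a <= v < m -> optimal v l).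
  { intros v Hv. apply NNPP. intro Hnot.
    assert (m <= v); [| lra]. apply Hlub. intros u [Hu Hopt].
    destruct (Rle_dec u v); auto. exfalso. apply Hnot, Hopt. lra. }
  destruct (Hstd m ltac:(lra)) as [HIm Hstdm].
  destruct (optimal_beyond_standard m a l HIm Hstdm ltac:(lra)) as [dm [Hdm Habove]];
    [intros s Hs; apply Hbelow; lra |].
  assert (Hm : m = b).
  { apply NNPP. intro Hne.
    destruct (Hstep m dm) as [HE Hlt]; [destruct Hmb; [lra | contradiction] | auto | |].
    - intros v Hv. destruct (Rlt_dec v m); [apply Hbelow | apply Habove]; lra.
    - specialize (Hub _ HE). lra. }
  intros u Hu. destruct (Rlt_dec u m); [apply Hbelow | apply Habove]; lra.
Qed.

Lemma optimal_across_segment s t l d :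
  (forall u, Rmin s t <= u <= Rmax s t -> I u /\ standard mul e phi alpha I u) ->
  0 < d -> (forall u, Rabs (u - s) < d -> optimal u l) -> optimal t l.
Proof.
  intros Hseg Hd Hl.
  assert (Hs0 : Rabs (s - s) < d) by (rewrite Rminus_diag, Rabs_R0; auto).
  destruct (Rtotal_order s t) as [Hst | [<- | Hts]]; [| auto |].
  - rewrite Rmin_left, Rmax_right in Hseg by lra.
    apply (optimal_propagates s t l d); auto; lra.
  - rewrite Rmin_right, Rmax_left in Hseg by lra.
    destruct (optimal_near_standard t (proj2 (Hseg t ltac:(lra)))) as [lt [dt [Hdt Hlt]]].
    assert (Hprop : forall u, t <= u <= s -> optimal u lt)
      by (apply (optimal_propagates t s lt dt); auto; intros v Hv; apply Hlt, Hv).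
    pose proof (I_pos t (proj1 (Hseg t ltac:(lra)))).
    pose proof (Rmax_l t (s - d)); pose proof (Rmax_r t (s - d)).
    assert (Hsame : forall u, 0 < u -> tnorm u (map phi l) = tnorm u (map phi lt)).
    { apply (tnorm_agree_on_interval _ _ (Rmax t (s - d)) s).
      { split; [lra | apply Rmax_lub_lt; lra]. }
      intros u Hu. assert (Hus : Rabs (u - s) < d) by (apply Rabs_def1; lra).
      rewrite (proj2 (Hl u Hus)), (proj2 (Hprop u ltac:(lra))). auto. }
    split; [apply (Hl s Hs0) |]. rewrite Hsame by auto. apply Hprop. lra.
Qed.

Definition has_optimal (t : R) (Z : list G) : Prop := exists l, incl l Z /\ optimal t l.

Lemma has_optimal_incl t Z Z' : incl Z Z' -> has_optimal t Z -> has_optimal t Z'.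
Proof. intros HZ [l [Hl Hopt]]. exists l. split; auto. eapply incl_tran; eauto. Qed.

Section FinitelyManyExceptions.

Variable L : list R.
Hypothesis L_exceptional : forall t, exceptional mul e phi alpha I t -> In t L.

Lemma standard_off_exceptions u : I u -> ~ In u L -> standard mul e phi alpha I u.
Proof. intros Hu HuL. apply NNPP. intro Hns. apply HuL, L_exceptional. now split. Qed.

Lemma component_has_optimal k : exists Z,
  forall t, I t -> ~ In t L -> count_below L t = k -> has_optimal t Z.
Proof.
  destruct (classic (exists s, I s /\ ~ In s L /\ count_below L s = k))
    as [[s [Hs [HsL Hsk]]] | Hnone].
  2:{ exists []. intros t Ht HtL Htk. exfalso. apply Hnone. now exists t. }
  destruct (optimal_near_standard s (standard_off_exceptions s Hs HsL)) as [ls [ds [Hds Hls]]].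
  exists ls. intros t Ht HtL Htk. exists ls. split; [apply incl_refl |].
  apply (optimal_across_segment s t ls ds); [| auto | intros u Hu; apply Hls, Hu].
  intros u Hu.
  assert (HIu : I u).
  { apply (in_oint_convex lo hi (Rmin s t) (Rmax s t)); auto;
      unfold Rmin, Rmax; destruct (Rle_dec s t); auto. }
  split; auto. apply standard_off_exceptions; auto.
  apply (count_below_eq_segment L s t u); congruence.
Qed.

Lemma finite_replacement_of_finitely_exceptional :
  exists Rl, In e Rl /\ replaces_unif mul e phi alpha (fun x => In x Rl) I.
Proof.
  destruct (merge_witnesses (fun _ : G => True)
      (fun k Z => forall t, I t -> ~ In t L -> count_below L t = k -> has_optimal t Z)
      ltac:(intros k Z Z' HZ H t Ht HtL Htk; eapply has_optimal_incl; eauto)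
      (seq 0 (S (length L)))) as [Z1 [_ HZ1]].
  { intros k _. destruct (component_has_optimal k) as [Z HZ]. now exists Z. }
  destruct (merge_witnesses (fun _ : G => True) (fun y Z => I y -> has_optimal y Z)
      ltac:(intros y Z Z' HZ H Hy; eapply has_optimal_incl; eauto) L) as [Z2 [_ HZ2]].
  { intros y _. destruct (classic (I y)) as [Hy | Hy].
    - destruct (att y Hy) as [l Hl]. exists l. split; [auto | exists l; split; auto using incl_refl].
    - exists []. split; [intros z [] | contradiction]. }
  exists (e :: Z1 ++ Z2). split; [left; auto |]. intros t Ht.
  assert (Hopt : has_optimal t (Z1 ++ Z2)).
  { destruct (classic (In t L)) as [HtL | HtL].
    - apply (has_optimal_incl t Z2); auto using incl_appr, incl_refl.
    - apply (has_optimal_incl t Z1); auto using incl_appl, incl_refl.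
      apply (HZ1 (count_below L t)); auto.
      apply in_seq. pose proof (count_below_le L t). lia. }
  destruct Hopt as [l [Hl Hlopt]].
  apply (replaces_at_of_optimal _ t l); auto.
  apply Forall_forall. intros z Hz. right. auto.
Qed.

End FinitelyManyExceptions.

End OpenInterval.

End Heights.

Theorem theorem2p2
  (G : Type) (mul : G -> G -> G) (inv : G -> G) (e : G)
  (mul_assoc : forall x y z, mul x (mul y z) = mul (mul x y) z)
  (mul_comm : forall x y, mul x y = mul y x)
  (mul_e : forall x, mul x e = x)
  (mul_inv : forall x, mul x (inv x) = e)
  (G_countable : exists f : nat -> G, forall x, exists n, f n = x)
  (phi : G -> R)
  (phi_nonneg : forall x, 0 <= phi x)
  (phi_e : phi e = 0)
  (phi_inv : forall x, phi x = phi (inv x))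
  (alpha : G)
  (lo : R) (hi : option R)
  (lo_nonneg : 0 <= lo)
  (I_nonempty : match hi with Some b => lo < b | None => True end)
  (att : forall t, in_oint (Some lo) hi t -> attained mul e phi t alpha) :
  let I := in_oint (Some lo) hi in
  (* (i) <-> (ii) *)
  ((exists X : list (list R), X <> nil /\
      forall t, I t ->
        (exists x, In x X /\ phit mul e phi t alpha = tnorm t x) /\
        (forall x, In x X -> phit mul e phi t alpha <= tnorm t x))
   <->
   (exists L : list R, forall t, exceptional mul e phi alpha I t -> In t L)) /\
  (* (ii) <-> (iii) *)
  ((exists L : list R, forall t, exceptional mul e phi alpha I t -> In t L)
   <->
   (exists Rl : list G, In e Rl /\
      replaces_unif mul e phi alpha (fun x => In x Rl) I)) /\
  (* (iii) <-> (iv) *)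
  ((exists Rl : list G, In e Rl /\
      replaces_unif mul e phi alpha (fun x => In x Rl) I)
   <->
   (exists S : G -> Prop, S e /\
      (exists L : list R, forall x, S x -> In (phi x) L) /\
      replaces_unif mul e phi alpha S I)).
Proof.
  intros I.
  assert (I_pos : forall t, I t -> 0 < t) by (intros t [Ht _]; simpl in Ht; lra).
  pose proof (finitely_exceptional_of_min_norm G mul e phi alpha (Some lo) hi I_pos) as i_ii.
  pose proof (finite_replacement_of_finitely_exceptional G mul e phi alpha mul_e
    (Some lo) hi I_pos G_countable att) as ii_iii.
  pose proof (min_norm_of_finite_heights G mul e phi alpha mul_e I I_pos) as iv_i.
  assert (Rl_heights : forall Rl x, In x Rl -> In (phi x) (map phi Rl))
    by (intros Rl x; apply in_map).
  split; [| split]; split.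
  - intros [X [_ HX]]. exact (i_ii X HX).
  - intros [L HL]. destruct (ii_iii L HL) as [Rl [_ Hrep]].
    destruct (iv_i _ _ (Rl_heights Rl) Hrep) as [X HX]. now exists X.
  - intros [L HL]. exact (ii_iii L HL).
  - intros [Rl [_ Hrep]]. destruct (iv_i _ _ (Rl_heights Rl) Hrep) as [X [_ HX]].
    exact (i_ii X HX).
  - intros [Rl [He Hrep]]. exists (fun x => In x Rl).
    split; [| split]; auto. exists (map phi Rl). apply Rl_heights.
  - intros [S [_ [[L HL] Hrep]]]. destruct (iv_i S L HL Hrep) as [X [_ HX]].
    destruct (i_ii X HX) as [L' HL']. exact (ii_iii L' HL').
Qed.
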